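(* Let $\boldsymbol{\beta}\in\mathbb{R}^q$ be fixed, let $\boldsymbol{x}_1,\dots,\boldsymbol{x}_r$ be fixed covariate vectors, and let $h(\boldsymbol{x},\boldsymbol{\beta})\in(0,1)$ be a known function differentiable in $\boldsymbol{\beta}$, with gradient $\nabla_{\boldsymbol{\beta}}h(\boldsymbol{x},\boldsymbol{\beta})$ (a column vector). For $\mu>0$ define the $(q+1)\times(q+1)$ Fisher information matrix $$I_r(\boldsymbol{\beta},\mu)=\begin{bmatrix}\sum_{i=1}^r\frac{\mu\,\nabla_{\boldsymbol{\beta}}h(\boldsymbol{x}_i,\boldsymbol{\beta})\nabla_{\boldsymbol{\beta}}'h(\boldsymbol{x}_i,\boldsymbol{\beta})}{h(\boldsymbol{x}_i,\boldsymbol{\beta})} & \sum_{i=1}^r\nabla_{\boldsymbol{\beta}}h(\boldsymbol{x}_i,\boldsymbol{\beta})\\ \sum_{i=1}^r\nabla_{\boldsymbol{\beta}}'h(\boldsymbol{x}_i,\boldsymbol{\beta}) & \sum_{i=1}^r\frac{h(\boldsymbol{x}_i,\boldsymbol{\beta})}{\mu}\end{bmatrix},$$ and suppose it is nonsingular, with inverse $V=V(\mu)$ (the asymptotic variance-covariance matrix of the MLE of $(\boldsymbol{\beta},\mu)$). Then, with $\boldsymbol{\beta}$ and the $\boldsymbol{x}_i$ held fixed, each of the first $q$ diagonal entries of $V(\mu)$ (the asymptotic variances of the components of $\hat{\boldsymbol{\beta}}$) is a nonincreasing function of $\mu\in(0,\infty)$, while the last diagonal entry of $V(\mu)$ (the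 asymptotic variance of $\hat\mu$) is a nondecreasing function of $\mu\in(0,\infty)$.
   Context: Model: observations $y_i\sim\mathrm{Bin}(n_i,p_i)$, $i=1,\dots,r$, independent, with $p_i=h(\boldsymbol{x}_i,\boldsymbol{\beta})$ for a known link-type function $h$, where the sizes $n_i$ are unknown and are independent Poisson random variables with common mean $\mu$; hence marginally $y_i\sim\mathrm{Poisson}(\mu h(\boldsymbol{x}_i,\boldsymbol{\beta}))$, and $I_r(\boldsymbol{\beta},\mu)$ above is the Fisher information matrix for $(\boldsymbol{\beta},\mu)$ in this model. The prime denotes transpose. *)

From HB Require Import structures.
From mathcomp Require Import all_boot all_order all_algebra.
From mathcomp Require Import all_classical all_reals all_analysis.
Set Implicit Arguments. Unset Strict Implicit. Unset Printing Implicit Defensive.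
Import Order.TTheory GRing.Theory Num.Theory.
Import numFieldNormedType.Exports.
Local Open Scope ring_scope.

Definition grad (R : realType) (q : nat) (f : 'rV[R]_q -> R) (b : 'rV[R]_q)
  : 'cV[R]_q :=
  \col_(j < q) ('D_(delta_mx 0 j) f b).

Definition fisher_info (R : realType) (T : Type) (q r : nat)
  (h : T -> 'rV[R]_q -> R) (x : 'I_r -> T) (beta : 'rV[R]_q) (mu : R)
  : 'M[R]_(q + 1) :=
  block_mx
    (\sum_(i < r) ((mu / h (x i) beta) *: (grad (h (x i)) beta *m (grad (h (x i)) beta)^T)))
    (\sum_(i < r) grad (h (x i)) beta)
    (\sum_(i < r) (grad (h (x i)) beta)^T)
    ((\sum_(i < r) h (x i) beta / mu)%:M).

Definition avar (R : realType) (T : Type) (q r : nat)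
  (h : T -> 'rV[R]_q -> R) (x : 'I_r -> T) (beta : 'rV[R]_q) (mu : R)
  : 'M[R]_(q + 1) := invmx (fisher_info h x beta mu).

From HB Require Import structures.
From mathcomp Require Import all_boot all_order all_algebra.
From mathcomp Require Import all_classical all_reals all_analysis.
Import Order.TTheory GRing.Theory Num.Theory.
Import numFieldNormedType.Exports.
Local Open Scope ring_scope.

(* Write D(a, b) for the block-diagonal matrix diag(a I_q, b).  The Fisher
   information scales as I(mu) = D(mu, 1) I(1) D(1, 1/mu), hence
   V(mu) = D(1, mu) V(1) D(1/mu, 1): the first q diagonal entries of V(mu) are
   those of V(1) divided by mu, the last one is mu times that of V(1).  These
   entries of V(1) are nonnegative because I(1) = sum_i v_i v_i' / h_i with
   v_i = (grad h_i, h_i). *)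

Lemma sum_block_mx (R : nmodType) (m1 m2 n1 n2 r : nat)
    (A : 'I_r -> 'M[R]_(m1, n1)) (B : 'I_r -> 'M[R]_(m1, n2))
    (C : 'I_r -> 'M[R]_(m2, n1)) (D : 'I_r -> 'M[R]_(m2, n2)) :
  \sum_(i < r) block_mx (A i) (B i) (C i) (D i) =
  block_mx (\sum_i A i) (\sum_i B i) (\sum_i C i) (\sum_i D i).
Proof.
elim: r A B C D => [|r IH] A B C D; first by rewrite !big_ord0 block_mx0.
by rewrite !big_ord_recr /= IH add_block_mx.
Qed.

Lemma invmx_mul3 (R : comUnitRingType) (n : nat) (P M Q : 'M[R]_n) :
    P \in unitmx -> M \in unitmx -> Q \in unitmx ->
  invmx (P *m M *m Q) = invmx Q *m invmx M *m invmx P.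
Proof.
move=> uP uM uQ; have uPMQ : P *m M *m Q \in unitmx by rewrite !unitmx_mul uP uM uQ.
have inv_right : P *m M *m Q *m (invmx Q *m invmx M *m invmx P) = 1%:M.
  by rewrite !mulmxA mulmxK // mulmxK // mulmxV.
by rewrite -[LHS]mulmx1 -inv_right mulKmx.
Qed.

Section BlockScalar.
Context {R : fieldType} {m n : nat}.

Definition block_scalar_mx (a b : R) : 'M[R]_(m + n) := block_mx a%:M 0 0 b%:M.

Lemma block_scalar_mx_conj (a b c d : R) (A : 'M[R]_(m + n)) :
  block_scalar_mx a b *m A *m block_scalar_mx c d =
  block_mx ((a * c) *: ulsubmx A) ((a * d) *: ursubmx A)
           ((b * c) *: dlsubmx A) ((b * d) *: drsubmx A).
Proof.
rewrite -{1}[A]submxK /block_scalar_mx !mulmx_block.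
rewrite !mul0mx !mulmx0 !addr0 !add0r !mul_scalar_mx !mul_mx_scalar.
by rewrite !scalerA ![_ * a]mulrC ![_ * b]mulrC.
Qed.

Lemma block_scalar_mx_conj_ul (a b c d : R) (A : 'M[R]_(m + n)) (i j : 'I_m) :
  (block_scalar_mx a b *m A *m block_scalar_mx c d) (lshift n i) (lshift n j) =
  a * c * A (lshift n i) (lshift n j).
Proof. by rewrite block_scalar_mx_conj block_mxEul !mxE. Qed.

Lemma block_scalar_mx_conj_dr (a b c d : R) (A : 'M[R]_(m + n)) (i j : 'I_n) :
  (block_scalar_mx a b *m A *m block_scalar_mx c d) (rshift m i) (rshift m j) =
  b * d * A (rshift m i) (rshift m j).
Proof. by rewrite block_scalar_mx_conj block_mxEdr !mxE. Qed.

Lemma block_scalar_mx_unit (a b : R) :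
  a != 0 -> b != 0 -> block_scalar_mx a b \in unitmx.
Proof.
move=> a0 b0; rewrite block_diag_mx_unit !unitmxE !det_scalar !unitfE.
by rewrite !expf_neq0.
Qed.

Lemma invmx_block_scalar_mx (a b : R) :
  a != 0 -> b != 0 -> invmx (block_scalar_mx a b) = block_scalar_mx a^-1 b^-1.
Proof.
by move=> a0 b0; rewrite invmx_block_diag ?block_scalar_mx_unit // !invmx_scalar.
Qed.

End BlockScalar.

Definition nonneg_form {R : numDomainType} {n : nat} (A : 'M[R]_n) :=
  forall y : 'cV[R]_n, 0 <= (y^T *m A *m y) 0 0.

Lemma nonneg_form_sum_outer (R : realDomainType) (n r : nat)
    (c : 'I_r -> R) (v : 'I_r -> 'cV[R]_n) :
  (forall i, 0 <= c i) -> nonneg_form (\sum_i c i *: (v i *m (v i)^T)).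
Proof.
move=> c_ge0 y; rewrite mulmx_sumr mulmx_suml summxE; apply: sumr_ge0 => i _.
rewrite -scalemxAr -scalemxAl mxE; apply: mulr_ge0 => //.
have -> : y^T *m (v i *m (v i)^T) *m y = ((v i)^T *m y)^T *m ((v i)^T *m y).
  by rewrite trmx_mul trmxK !mulmxA.
rewrite mxE big_ord1 !mxE -expr2; exact: sqr_ge0.
Qed.

(* No symmetry of [A] is needed: with [y := A^-1 e_k] the form equals [(A^-1)_kk]. *)
Lemma invmx_diag_ge0 (R : numFieldType) (n : nat) (A : 'M[R]_n) (k : 'I_n) :
  A \in unitmx -> nonneg_form A -> 0 <= invmx A k k.
Proof.
move=> uA A_ge0; pose y : 'cV[R]_n := invmx A *m delta_mx k 0.
have -> : invmx A k k = (y^T *m A *m y) 0 0.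
  by rewrite -mulmxA /y [A *m _]mulmxA mulmxV // mul1mx -!colE !mxE.
exact: A_ge0.
Qed.

Section Fisher.
Context {R : realType} {T : Type} {q r : nat}.
Context {h : T -> 'rV[R]_q -> R} {x : 'I_r -> T} {beta : 'rV[R]_q}.
Hypothesis h_gt0 : forall i, 0 < h (x i) beta.

Local Notation g i := (grad (h (x i)) beta).
Local Notation hx i := (h (x i) beta).
Local Notation I := (fisher_info h x beta).
Local Notation V := (avar h x beta).

Lemma fisher_info_scale (mu : R) :
  mu != 0 -> I mu = block_scalar_mx mu 1 *m I 1 *m block_scalar_mx 1 mu^-1.
Proof.
move=> mu0; rewrite block_scalar_mx_conj /fisher_info.
rewrite block_mxKul block_mxKur block_mxKdl block_mxKdr.
rewrite !mulr1 mul1r mulfV // !scale1r scale_scalar_mx mulr_sumr scaler_sumr.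
congr block_mx.
- by apply: eq_bigr => i _; rewrite scalerA mul1r.
- by congr _%:M; apply: eq_bigr => i _; rewrite divr1 mulrC.
Qed.

Lemma avar_scale (mu : R) : mu != 0 -> I 1 \in unitmx ->
  V mu = block_scalar_mx 1 mu *m V 1 *m block_scalar_mx mu^-1 1.
Proof.
move=> mu0 uI1; rewrite /avar fisher_info_scale // invmx_mul3 ?block_scalar_mx_unit //.
  by rewrite !invmx_block_scalar_mx ?invr_eq0 ?oner_neq0 // invrK invr1.
by rewrite invr_eq0.
Qed.

Lemma fisher_info1_outer :
  I 1 = \sum_i (hx i)^-1 *: (col_mx (g i) (hx i)%:M *m (col_mx (g i) (hx i)%:M)^T).
Proof.
have hx0 i : hx i != 0 by exact: lt0r_neq0.
under [RHS]eq_bigr => i _ do rewrite tr_col_mx mul_col_row scale_block_mx.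
rewrite sum_block_mx /fisher_info (raddf_sum (@scalar_mx _ 1)).
f_equal; apply: eq_bigr => i _.
- by rewrite mul1r.
- by rewrite tr_scalar_mx mul_mx_scalar scalerA mulVf ?scale1r.
- by rewrite mul_scalar_mx scalerA mulVf ?scale1r.
- rewrite tr_scalar_mx -scalar_mxM -scale_scalar_mx scalerA mulVf //.
  by rewrite divr1 scale1r.
Qed.

Lemma avar1_diag_ge0 (k : 'I_(q + 1)) : I 1 \in unitmx -> 0 <= V 1 k k.
Proof.
move=> uI1; apply: invmx_diag_ge0 => //; rewrite fisher_info1_outer.
by apply: nonneg_form_sum_outer => i; rewrite invr_ge0 ltW.
Qed.

End Fisher.

Theorem mainTheorem1 (R : realType) (T : Type) (q r : nat)
  (h : T -> 'rV[R]_q -> R) (x : 'I_r -> T) (beta : 'rV[R]_q)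
  (h_range : forall (t : T) (b : 'rV[R]_q), 0 < h t b < 1)
  (h_diff : forall i : 'I_r, differentiable (h (x i)) beta)
  (nonsing : forall mu : R, 0 < mu -> fisher_info h x beta mu \in unitmx) :
  (forall (j : 'I_q) (mu1 mu2 : R), 0 < mu1 -> mu1 <= mu2 ->
     avar h x beta mu2 (lshift 1 j) (lshift 1 j)
       <= avar h x beta mu1 (lshift 1 j) (lshift 1 j)) /\
  (forall mu1 mu2 : R, 0 < mu1 -> mu1 <= mu2 ->
     avar h x beta mu1 (rshift q ord0) (rshift q ord0)
       <= avar h x beta mu2 (rshift q ord0) (rshift q ord0)).
Proof.
have h_gt0 i : 0 < h (x i) beta by case/andP: (h_range (x i) beta).
have uI1 := nonsing 1 ltr01.
split=> [j|] mu1 mu2 mu1_gt0 le_mu12; have mu2_gt0 := lt_le_trans mu1_gt0 le_mu12.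
all: rewrite (avar_scale mu1 (lt0r_neq0 mu1_gt0) uI1).
all: rewrite (avar_scale mu2 (lt0r_neq0 mu2_gt0) uI1).
- rewrite !block_scalar_mx_conj_ul !mul1r.
  by apply: ler_wpM2r; [exact: avar1_diag_ge0 | rewrite lef_pV2 ?posrE].
- rewrite !block_scalar_mx_conj_dr !mulr1.
  by apply: ler_wpM2r => //; exact: avar1_diag_ge0.
Qed.
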